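(* For every $r\ge\sigma>0$, the distribution $\mathcal{N}(0,\sigma^2I_d)$ has $(r,\frac{\sigma^2}{r},\frac{1}{20})$ margins.
   Context: A distribution $\mathcal{D}$ on $\mathbb{R}^d$ has $(r,\alpha,\gamma)$ margins if for all $\beta\in\mathbb{R}^d\setminus\{0\}$ and all $b\le r\|\beta\|$, with $e\sim\mathcal{D}$, $\Pr[\beta\cdot e>b+\alpha\|\beta\|\mid\beta\cdot e\ge b]\ge\gamma$. *)

From HB Require Import structures.
From mathcomp Require Import all_boot all_order all_algebra.
From mathcomp Require Import all_classical all_reals all_analysis.
Set Implicit Arguments. Unset Strict Implicit. Unset Printing Implicit Defensive.
Import Order.TTheory GRing.Theory Num.Theory.
Local Open Scope classical_set_scope.
Local Open Scope ring_scope.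

Section Defs.
Context {R : realType}.

Definition dotp (d : nat) (u v : 'rV[R]_d) : R := \sum_(i < d) u 0 i * v 0 i.

(* Euclidean norm (mathcomp's matrix norm is the sup norm, so define it). *)
Definition enorm (d : nat) (u : 'rV[R]_d) : R := Num.sqrt (dotp u u).

(* d-fold iterated Lebesgue integral of F against N(0, s^2) in every
   coordinate (Fubini/Tonelli: this is integration against the product
   measure N(0, s^2)^{\otimes d} = N(0, s^2 I_d)). The list l collects
   the coordinates already integrated, innermost first. *)
Fixpoint gauss_iter_int (s : R) (d : nat) (F : seq R -> \bar R) : \bar R :=
  match d with
  | 0 => F [::]
  | d'.+1 => (\int[normal_prob 0 s]_x gauss_iter_int s d' (fun l => F (x :: l)))%E
  end.

Definition vec_of_seq (d : nat) (l : seq R) : 'rV[R]_d := \row_(i < d) nth 0 l i.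

Definition gauss_prob (s : R) (d : nat) (A : set 'rV[R]_d) : \bar R :=
  gauss_iter_int s d (fun l => (\1_A (vec_of_seq d l) : R)%:E).

Definition cond_prob (d : nat) (P : set 'rV[R]_d -> \bar R)
  (A B : set 'rV[R]_d) : R := fine (P (A `&` B)) / fine (P B).

Definition has_margins (d : nat) (P : set 'rV[R]_d -> \bar R)
  (r alpha gamma : R) : Prop :=
  forall (beta : 'rV[R]_d) (b : R), beta != 0 -> b <= r * enorm beta ->
    gamma <= cond_prob P [set e | b + alpha * enorm beta < dotp beta e]
                         [set e | b <= dotp beta e].

End Defs.

From mathcomp Require Import all_boot all_order all_algebra.
From mathcomp Require Import all_classical all_reals all_analysis.
From mathcomp Require Import measurable_realfun ring lra.
Import Order.TTheory GRing.Theory Num.Theory.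
Local Open Scope classical_set_scope.
Local Open Scope ring_scope.

(* For e ~ N(0, s^2 I_d) the projection beta.e is distributed as
   s |beta| Z with Z standard normal (a sum of independent centred Gaussians is
   a centred Gaussian whose variance is the sum of the variances).  Setting
   T := b / (s |beta|) and A := s / r, the hypotheses become 0 < A <= 1 and
   A T <= 1, and the claim becomes P(Z > T + A) >= P(Z >= T) / 20.  Shifting
   the tail by A multiplies the density by exp(-A^2/2 - A y), which is at
   least exp(-A^2/2 - A (T' + 1)) on [T, T' + 1] with T' := max(T, 0); the
   same tilting argument with shift 1 shows that [T' + 1, +oo[ carries at most
   a fraction exp(-1/2 - T') of the tail beyond T.  An elementary bound on the
   resulting product of exponentials gives the constant 1/20. *)

Section affine_substitution.
Context {R : realType}.
Local Notation mu := (@lebesgue_measure R).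

Lemma preimage_affine_itv_oc (a c p q : R) : 0 < a ->
  (fun x => a * x + c) @^-1` `]p, q] = `](p - c) / a, (q - c) / a]%classic.
Proof.
move=> a0; apply/seteqP; split => x /=; rewrite !in_itv /= => /andP[px xq];
  apply/andP; split.
- by rewrite ltr_pdivrMr // mulrC ltrBlDr.
- by rewrite ler_pdivlMr // mulrC lerBrDr.
- by rewrite -ltrBlDr mulrC -ltr_pdivrMr.
- by rewrite -lerBrDr mulrC -ler_pdivlMr.
Qed.

Lemma measurable_affine (a c : R) : measurable_fun setT (fun x : R => a * x + c).
Proof. by apply: measurable_funD => //; exact: measurable_funM. Qed.

Lemma lebesgue_measure_affine (a c : R) (A : set R) : 0 < a -> measurable A ->
  mu A = (a%:E * mu ((fun x => a * x + c)%R @^-1` A))%E.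
Proof.
move=> a0 mA.
pose f x : measurableTypeR R := a * x + c.
have -> : (a%:E * mu (f @^-1` A))%E = pushforward (mscale (NngNum (ltW a0)) mu) f A by [].
(* The measure structure of a pushforward takes the measurability proof of the
   map as an argument, which [apply] finds in the context. *)
have mf : measurable_fun setT f by exact: measurable_affine.
apply: lebesgue_measure_unique => // _ [[p q] _ <-] /=.
rewrite /pushforward /mscale /= preimage_affine_itv_oc //.
rewrite !lebesgue_measure_itv /= !lte_fin ltr_pM2r ?invr_gt0 // ltrD2r.
case: ifPn => _; last by rewrite mule0.
by rewrite -EFinD -EFinM; congr (_%:E); field; rewrite gt_eqF.
Qed.

Lemma ge0_integral_affine (a c : R) (G : R -> \bar R) : 0 < a ->
  measurable_fun setT G -> (forall x, 0 <= G x)%E ->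
  (\int[mu]_x G (a * x + c)%R = a^-1%:E * \int[mu]_x G x)%E.
Proof.
move=> a0 mG G0.
pose f x : measurableTypeR R := a * x + c.
have mf : measurable_fun setT f by exact: measurable_affine.
have mGf : measurable_fun setT (G \o f) by exact: measurableT_comp.
transitivity (a^-1%:E * \int[pushforward (mscale (NngNum (ltW a0)) mu) f]_x G x)%E.
  rewrite ge0_integral_pushforward //= preimage_setT ge0_integral_mscale //=.
  by rewrite muleA -EFinM mulVf ?gt_eqF // mul1e.
congr (_ * _)%E; apply: eq_measure_integral => B mB _ /=.
by rewrite /pushforward /mscale /= (lebesgue_measure_affine _ c _ a0 mB).
Qed.

Lemma ge0_integral_oppr (G : R -> \bar R) :
  measurable_fun setT G -> (forall x, 0 <= G x)%E ->
  (\int[mu]_x G (- x)%R = \int[mu]_x G x)%E.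
Proof.
move=> mG G0.
transitivity (\int[pushforward mu (-%R : R -> measurableTypeR R)]_x G x)%E.
  by rewrite ge0_integral_pushforward //= preimage_setT.
by apply: eq_measure_integral => B mB _; exact: lebesgue_measureN.
Qed.

End affine_substitution.

Section normal_integrals.
Context {R : realType}.
Local Notation mu := (@lebesgue_measure R).

Lemma ge0_integral_normal_prob (m s : R) (f : R -> \bar R) :
  measurable_fun setT f -> (forall x, 0 <= f x)%E ->
  (\int[normal_prob m s]_x f x = \int[mu]_x (f x * (normal_pdf m s x)%:E))%E.
Proof.
move=> mf f0; have ac := @normal_prob_dominates R m s.
rewrite -(Radon_Nikodym_SigmaFinite.change_of_variables ac) //.
have mpdf : measurable_fun setT (EFin \o normal_pdf m s).
  by apply/measurable_EFinP; exact: measurable_normal_pdf.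
have iRN := Radon_Nikodym_SigmaFinite.f_integrable ac.
apply: ae_eq_integral => //.
- by apply: emeasurable_funM => //; exact: measurable_int iRN.
- exact: emeasurable_funM.
apply: ae_eqe_mul2l; apply: integral_ae_eq => // E _ mE.
by rewrite -Radon_Nikodym_SigmaFinite.f_integral.
Qed.

Definition sqrt2pi : R := Num.sqrt (pi * 2).

Lemma sqrt2pi_gt0 : 0 < sqrt2pi.
Proof. by rewrite sqrtr_gt0 mulr_gt0 // pi_gt0. Qed.

Lemma normal_pdf_expR (m s x : R) : 0 < s ->
  normal_pdf m s x = (s * sqrt2pi)^-1 * expR (- (x - m) ^+ 2 / (s ^+ 2 * 2)).
Proof.
move=> s0; rewrite normal_pdfE ?gt_eqF //= /normal_peak /normal_fun.
congr (_^-1 * expR (_ / _)); last by rewrite mulr_natr.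
rewrite /sqrt2pi -mulrnAr sqrtrM ?sqr_ge0 // sqrtr_sqr ger0_norm ?ltW //.
by rewrite mulr_natr.
Qed.

Lemma normal_pdf_scale (m s x : R) : 0 < s ->
  normal_pdf m s x = s^-1 * normal_pdf 0 1 ((x - m) / s).
Proof.
move=> s0; rewrite !normal_pdf_expR //.
have -> : - ((x - m) / s - 0) ^+ 2 / (1 ^+ 2 * 2) = - (x - m) ^+ 2 / (s ^+ 2 * 2).
  by field; rewrite gt_eqF.
by field; rewrite !gt_eqF ?sqrt2pi_gt0.
Qed.

Lemma ge0_integral_normal_affine (m s : R) (f : R -> \bar R) : 0 < s ->
  measurable_fun setT f -> (forall x, 0 <= f x)%E ->
  (\int[normal_prob 0 1]_z f (s * z + m)%R = \int[normal_prob m s]_x f x)%E.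
Proof.
move=> s0 mf f0.
have mfa : measurable_fun setT (fun z => f (s * z + m)%R).
  exact: measurableT_comp mf (measurable_affine s m).
have pdf0 (x : R) : (0 <= (normal_pdf 0 1 x)%:E)%E by rewrite lee_fin normal_pdf_ge0.
rewrite (ge0_integral_normal_prob _ _ _ mf f0).
rewrite (ge0_integral_normal_prob _ _ _ mfa (fun z => f0 _)).
pose g x := (f x * (normal_pdf 0 1 ((x - m) / s))%:E)%E.
have mg : measurable_fun setT g.
  apply: emeasurable_funM => //; apply/measurable_EFinP.
  apply: measurableT_comp (measurable_normal_pdf 0 1) _.
  by apply: measurable_funM => //; exact: measurable_funB.
transitivity (\int[mu]_z g (s * z + m)%R)%E.
  by apply: eq_integral => z _; rewrite /g addrK mulrC mulfK ?gt_eqF.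
rewrite ge0_integral_affine //; last by move=> x; rewrite mule_ge0.
rewrite -ge0_integralZl_EFin //; last by rewrite invr_ge0 ltW.
  by apply: eq_integral => x _; rewrite /g muleCA -EFinM -normal_pdf_scale.
by move=> x _; rewrite mule_ge0.
Qed.

Lemma ge0_integral_normal01_oppr (f : R -> \bar R) :
  measurable_fun setT f -> (forall x, 0 <= f x)%E ->
  (\int[normal_prob 0 1]_z f (- z)%R = \int[normal_prob 0 1]_z f z)%E.
Proof.
move=> mf f0.
have mfN : measurable_fun setT (fun z : R => f (- z)%R).
  exact: measurableT_comp mf (measurable_funN _).
pose g x := (f x * (normal_pdf 0 1 x)%:E)%E.
have mg : measurable_fun setT g.
  apply: emeasurable_funM => //; apply/measurable_EFinP.
  exact: measurable_normal_pdf.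
rewrite !ge0_integral_normal_prob // -[RHS](ge0_integral_oppr _ mg); last first.
  by move=> x; rewrite mule_ge0 // lee_fin normal_pdf_ge0.
apply: eq_integral => z _; rewrite /g.
by rewrite !normal_pdf_expR // !subr0 sqrrN.
Qed.

Lemma normal_pdf_center (m s x : R) : 0 < s ->
  normal_pdf m s x = normal_pdf 0 s (x - m).
Proof. by move=> s0; rewrite !(normal_pdf_scale _ _ _ s0) subr0. Qed.

(* Completing the square in [x]: the joint density of [(X, a X + Y)] is the
   density of the sum times the conditional density of [X] given the sum. *)
Lemma normal_pdf_mul (s1 s2 a x z : R) : 0 < s1 -> 0 < s2 ->
  let S := Num.sqrt (a ^+ 2 * s1 ^+ 2 + s2 ^+ 2) in
  normal_pdf 0 s1 x * normal_pdf (a * x) s2 z =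
  normal_pdf 0 S z * normal_pdf (a * z * s1 ^+ 2 / S ^+ 2) (s1 * s2 / S) x.
Proof.
move=> s10 s20 S.
have S2_gt0 : 0 < a ^+ 2 * s1 ^+ 2 + s2 ^+ 2.
  by apply: ltr_wpDl; [rewrite mulr_ge0 ?sqr_ge0 | rewrite exprn_gt0].
have S_gt0 : 0 < S by rewrite sqrtr_gt0.
have SE : S ^+ 2 = a ^+ 2 * s1 ^+ 2 + s2 ^+ 2 by rewrite sqr_sqrtr ?ltW.
rewrite !normal_pdf_expR ?divr_gt0 ?mulr_gt0 //.
rewrite mulrACA -expRD [RHS]mulrACA -expRD; congr (_ * expR _).
  by field; rewrite !gt_eqF ?sqrt2pi_gt0.
rewrite !expr_div_n !exprMn SE.
by field; rewrite exprMn !gt_eqF.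
Qed.

Lemma ge0_integral_normal_shift (c s : R) (f : R -> \bar R) : 0 < s ->
  measurable_fun setT f -> (forall x, 0 <= f x)%E ->
  (\int[normal_prob 0 s]_y f (c + y)%R = \int[normal_prob c s]_x f x)%E.
Proof.
move=> s0 mf f0.
have mfc : measurable_fun setT (fun y => f (c + y)%R).
  exact: measurableT_comp mf (measurable_funD _ _).
rewrite -(ge0_integral_normal_affine _ _ _ s0 mfc (fun y => f0 _)).
under eq_integral do rewrite addr0 addrC.
exact: ge0_integral_normal_affine.
Qed.

Lemma ge0_integral_normal_prob_tonelli (m s : R) (g : R * R -> \bar R) :
  measurable_fun setT g -> (forall p, 0 <= g p)%E ->
  (\int[normal_prob m s]_x \int[mu]_z g (x, z)
   = \int[mu]_z \int[mu]_x ((normal_pdf m s x)%:E * g (x, z)))%E.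
Proof.
move=> mg g0; pose k p := ((normal_pdf m s p.1)%:E * g p)%E.
have mk : measurable_fun setT k.
  apply: emeasurable_funM mg; apply/measurable_EFinP.
  exact: measurableT_comp (measurable_normal_pdf m s) measurable_fst.
have k0 p : (0 <= k p)%E by rewrite mule_ge0 // lee_fin normal_pdf_ge0.
have mG : measurable_fun setT (fun x => \int[mu]_z g (x, z))%E.
  exact: (@measurable_fun_fubini_tonelli_F _ _ _ _ _ mu _ mg g0).
rewrite (ge0_integral_normal_prob _ _ _ mG); last by move=> x; exact: integral_ge0.
rewrite -(@fubini_tonelli _ _ _ _ _ mu mu k mk k0).
apply: eq_integral => x _; rewrite muleC -ge0_integralZl_EFin ?normal_pdf_ge0 //.
exact: measurableT_comp mg (pair1_measurable _).
Qed.

Lemma ge0_integral_normal_add (s1 s2 a : R) (f : R -> \bar R) :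
  0 < s1 -> 0 < s2 -> measurable_fun setT f -> (forall x, 0 <= f x)%E ->
  (\int[normal_prob 0 s1]_x \int[normal_prob 0 s2]_y f (a * x + y)%R
   = \int[normal_prob 0 (Num.sqrt (a ^+ 2 * s1 ^+ 2 + s2 ^+ 2))]_z f z)%E.
Proof.
move=> s10 s20 mf f0; set S := Num.sqrt _.
pose g (p : R * R) := (f p.2 * (normal_pdf 0 s2 (p.2 - a * p.1))%:E)%E.
have mg : measurable_fun setT g.
  apply: emeasurable_funM; first exact: measurableT_comp mf measurable_snd.
  apply/measurable_EFinP; apply: measurableT_comp (measurable_normal_pdf 0 s2) _.
  apply: measurable_funB; first exact: measurable_snd.
  exact: measurable_funM measurable_fst.
have g0 p : (0 <= g p)%E by rewrite mule_ge0 // lee_fin normal_pdf_ge0.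
transitivity (\int[normal_prob 0 s1]_x \int[mu]_z g (x, z))%E.
  apply: eq_integral => x _.
  rewrite (ge0_integral_normal_shift _ _ _ s20 mf f0).
  rewrite (ge0_integral_normal_prob _ _ _ mf f0).
  by apply: eq_integral => z _; rewrite normal_pdf_center.
rewrite ge0_integral_normal_prob_tonelli // (ge0_integral_normal_prob _ _ _ mf f0).
apply: eq_integral => z _.
under eq_integral => x _.
  rewrite /g /= muleCA -EFinM -normal_pdf_center // normal_pdf_mul // EFinM muleA.
  over.
rewrite /= ge0_integralZl ?mule_ge0 ?lee_fin ?normal_pdf_ge0 ?integral_normal_pdf ?mule1 //.
- by apply/measurable_EFinP; exact: measurable_normal_pdf.
- by move=> x _; rewrite lee_fin normal_pdf_ge0.
Qed.

End normal_integrals.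

Section gaussian_vectors.
Context {R : realType}.

Lemma integral_normal_prob_cst (m s : R) (c : \bar R) :
  (\int[normal_prob m s]_x c = c)%E.
Proof.
rewrite integral_cst //; transitivity (c * 1)%E; last exact: mule1.
by congr (_ * _)%E; exact: probability_setT.
Qed.

Lemma ge0_integral_normal_lincomb (s t a : R) (f : R -> \bar R) :
  0 < s -> 0 <= t -> measurable_fun setT f -> (forall x, 0 <= f x)%E ->
  (\int[normal_prob 0 s]_x \int[normal_prob 0 1]_z f (a * x + t * z)%R
   = \int[normal_prob 0 1]_z f (Num.sqrt (a ^+ 2 * s ^+ 2 + t ^+ 2) * z)%R)%E.
Proof.
move=> s0 t0 mf f0.
have mfa (b : R) : measurable_fun setT (fun x : R => f (b * x)%R).
  exact: measurableT_comp mf (measurable_funM _ _).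
have [<-|tp] := eqVneq 0 t.
  under eq_integral do under eq_integral do rewrite mul0r addr0.
  under eq_integral do rewrite integral_normal_prob_cst.
  rewrite -(ge0_integral_normal_affine _ _ _ s0 (mfa a) (fun x => f0 _)).
  rewrite expr0n addr0 sqrtrM ?sqr_ge0 // !sqrtr_sqr (gtr0_norm s0).
  have [a0|a0] := leP 0 a.
    by apply: eq_integral => z _; rewrite ger0_norm // addr0 mulrA.
  rewrite -(ge0_integral_normal01_oppr _ (mfa _)) //.
  by apply: eq_integral => z _; rewrite ltr0_norm // addr0; congr (f _); ring.
have {t0 tp}t0 : 0 < t by rewrite lt_def eq_sym tp.
have mfb (b : R) : measurable_fun setT (fun y : R => f (b + y)%R).
  exact: measurableT_comp mf (measurable_funD _ _).
transitivity (\int[normal_prob 0 s]_x \int[normal_prob 0 t]_y f (a * x + y)%R)%E.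
  apply: eq_integral => x _.
  rewrite -(ge0_integral_normal_affine _ _ _ t0 (mfb _) (fun y => f0 _)).
  by apply: eq_integral => z _; rewrite addr0.
have S0 : 0 < Num.sqrt (a ^+ 2 * s ^+ 2 + t ^+ 2).
  by rewrite sqrtr_gt0; apply: ltr_wpDl; [rewrite mulr_ge0 ?sqr_ge0 | rewrite exprn_gt0].
rewrite (ge0_integral_normal_add _ _ _ _ s0 t0 mf f0).
rewrite -(ge0_integral_normal_affine _ _ _ S0 mf f0).
by apply: eq_integral => z _; rewrite addr0.
Qed.

Lemma dotp_ge0 d (w : 'rV[R]_d) : 0 <= dotp w w.
Proof. by rewrite /dotp sumr_ge0 // => i _; rewrite -expr2 sqr_ge0. Qed.

Lemma enorm_gt0 d (w : 'rV[R]_d) : w != 0 -> 0 < enorm w.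
Proof.
move=> w0; rewrite sqrtr_gt0 lt_def dotp_ge0 andbT.
apply: contra w0 => ww0; apply/eqP/rowP => i; rewrite mxE.
have nn (j : 'I_d) : true -> 0 <= w 0 j * w 0 j by rewrite -expr2 sqr_ge0.
by have /eqP := @psumr_eq0P _ _ _ _ nn (eqP ww0) i isT; rewrite mulf_eq0 orbb => /eqP.
Qed.

Lemma dotp_cons d (w : 'rV[R]_d.+1) (x : R) (l : seq R) :
  dotp w (vec_of_seq d.+1 (x :: l)) = w 0 0 * x + dotp (col' 0 w) (vec_of_seq d l).
Proof.
rewrite /dotp big_ord_recl !mxE; congr (_ + _).
by apply: eq_bigr => i _; rewrite !mxE.
Qed.

Lemma enorm_col'0 d (w : 'rV[R]_d.+1) :
  enorm w = Num.sqrt (w 0 0 ^+ 2 + enorm (col' 0 w) ^+ 2).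
Proof.
rewrite /enorm sqr_sqrtr ?dotp_ge0 // /dotp big_ord_recl expr2; congr (Num.sqrt (_ + _)).
by apply: eq_bigr => i _; rewrite !mxE.
Qed.

Lemma gauss_iter_int_dotp (s : R) d (w : 'rV[R]_d) (f : R -> \bar R) : 0 < s ->
  measurable_fun setT f -> (forall x, 0 <= f x)%E ->
  gauss_iter_int s d (fun l => f (dotp w (vec_of_seq d l))) =
  (\int[normal_prob 0 1]_z f (s * enorm w * z)%R)%E.
Proof.
move=> s0; elim: d w f => [|d IH] w f mf f0 /=.
  rewrite /enorm /dotp !big_ord0 sqrtr0 mulr0.
  by under eq_integral do rewrite mul0r; rewrite integral_normal_prob_cst.
have mfb (b : R) : measurable_fun setT (fun y : R => f (b + y)%R).
  exact: measurableT_comp mf (measurable_funD _ _).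
transitivity (\int[normal_prob 0 s]_x \int[normal_prob 0 1]_z
    f (w 0 0 * x + s * enorm (col' 0 w) * z)%R)%E.
  apply: eq_integral => x _; rewrite -(IH _ _ (mfb _)) //.
  by congr (gauss_iter_int _ _ _); apply: funext => l; rewrite dotp_cons.
rewrite ge0_integral_normal_lincomb ?mulr_ge0 ?sqrtr_ge0 ?ltW //.
apply: eq_integral => z _; congr (f (_ * z)).
rewrite enorm_col'0 -[s in RHS]gtr0_norm // -sqrtr_sqr -sqrtrM ?sqr_ge0 //.
by congr Num.sqrt; ring.
Qed.

Lemma gauss_prob_dotp (s : R) d (w : 'rV[R]_d) (A : set R) : 0 < s -> measurable A ->
  gauss_prob s (dotp w @^-1` A) =
  normal_prob 0 1 ((fun z => s * enorm w * z) @^-1` A).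
Proof.
move=> s0 mA; rewrite /gauss_prob.
have mA1 : measurable_fun setT (fun x : R => (\1_A x : R)%:E).
  by apply/measurable_EFinP; exact: measurable_indic.
have -> : (fun l => (\1_(dotp w @^-1` A) (vec_of_seq d l) : R)%:E) =
          (fun l => (\1_A (dotp w (vec_of_seq d l)) : R)%:E) by [].
rewrite (gauss_iter_int_dotp _ _ _ _ s0 mA1) //.
rewrite -[X in normal_prob _ _ X]setIT -integral_indic //.
rewrite -[X in measurable X]setTI.
exact: mulrl_measurable measurableT _ mA.
Qed.

Lemma gauss_prob_halfspace (s c : R) d (w : 'rV[R]_d) (b : bool) :
  0 < s -> w != 0 ->
  gauss_prob s (dotp w @^-1` [set` Interval (BSide b c) +oo%O]) =
  normal_prob 0 1 [set` Interval (BSide b (c / (s * enorm w))) +oo%O].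
Proof.
move=> s0 w0; have k0 : 0 < s * enorm w by rewrite mulr_gt0 ?enorm_gt0.
rewrite gauss_prob_dotp //; congr (normal_prob 0 1 _).
by apply/seteqP; split => z; rewrite /= !in_itv /= !andbT lteif_pdivrMr // mulrC.
Qed.

End gaussian_vectors.

Section margin_constant.
Context {R : realType}.
Local Notation x := (expR (- (1 / 2)) : R).

Lemma expR_Nhalf_ge : 59 / 100 <= x.
Proof.
have e16 : 15 / 16 <= expR (- (1 / 16) : R) by have := expR_ge1Dx (- (1 / 16) : R); lra.
have -> : - (1 / 2) = 8%:R * (- (1 / 16)) :> R by lra.
rewrite expRM_natl.
by apply: le_trans (lerXn2r 8 _ _ e16); rewrite ?nnegrE ?expR_ge0 //; lra.
Qed.

Lemma expR_Nhalf_le : x <= 61 / 100.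
Proof.
have e64 : 65 / 64 <= expR (1 / 64 : R) by have := expR_ge1Dx (1 / 64 : R); lra.
have e2 : 100 / 61 <= expR (1 / 2 : R).
  have -> : 1 / 2 = 32%:R * (1 / 64) :> R by lra.
  rewrite expRM_natl.
  by apply: le_trans (lerXn2r 32 _ _ e64); rewrite ?nnegrE ?expR_ge0 //; lra.
by rewrite expRN invf_ple ?posrE ?expR_gt0 // invf_div.
Qed.

Lemma expR_Nhalf_natl (n : nat) : expR (- (n%:R / 2)) = x ^+ n :> R.
Proof. by rewrite -expRM_natl; congr expR; ring. Qed.

Lemma expR_Nhalf_X3_le : x ^+ 3 <= 1 / 4.
Proof.
have x61 : x ^+ 3 <= (61 / 100) ^+ 3.
  by rewrite lerXn2r ?nnegrE ?expR_ge0 ?expR_Nhalf_le //; lra.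
by apply: le_trans x61 _; lra.
Qed.

Lemma margin_constant_ge : 1 / 20 <= x ^+ 5 * (1 - x ^+ 3).
Proof.
have x59 : (59 / 100) ^+ 5 <= x ^+ 5.
  by rewrite lerXn2r ?nnegrE ?expR_ge0 ?expR_Nhalf_ge //; lra.
have x61 : x ^+ 3 <= (61 / 100) ^+ 3.
  by rewrite lerXn2r ?nnegrE ?expR_ge0 ?expR_Nhalf_le //; lra.
have := mulr_ge0 (etrans (subr_ge0 _ _) x59) (etrans (subr_ge0 _ _) x61).
set X5 := x ^+ 5 in x59 *; set X3 := x ^+ 3 in x61 *; nra.
Qed.

(* For [T <= 1] the left factor is at least [x^3 u] with [u = exp (-T)] in
   [[x^2, 1]], and [u (1 - x u) >= x^2 (1 - x^3)] there; for [T > 1] both factors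
   are bounded by constants. *)
Lemma margin_bound (A T : R) : 0 < A -> A <= 1 -> 0 <= T -> A * T <= 1 ->
  1 / 20 <= expR (- (A ^+ 2 / 2) - A * (T + 1)) * (1 - expR (- (1 / 2) - T)).
Proof.
move=> A0 A1 T0 AT; have key := margin_constant_ge.
have x0 : 0 <= x := expR_ge0 _.
have x3 := expR_Nhalf_X3_le; have xu := expR_Nhalf_le.
have A2 : A ^+ 2 <= 1 by rewrite expr2; nra.
have [T1|T1] := lerP T 1.
- have E : x ^+ 3 * expR (- T) <= expR (- (A ^+ 2 / 2) - A * (T + 1)).
    by rewrite -expR_Nhalf_natl -expRD ler_expR; nra.
  rewrite [expR (- (1 / 2) - T)]expRD.
  have u1 : expR (- T) <= 1 by rewrite expR_le1; lra.
  have u2 : x ^+ 2 <= expR (- T) by rewrite -expR_Nhalf_natl ler_expR; lra.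
  set u := expR (- T) in E u1 u2 *.
  have xu1 : x * u <= x by rewrite ler_piMr.
  have Eu : x ^+ 5 * (1 - x ^+ 3) <= x ^+ 3 * u * (1 - x * u).
    have : 0 <= 1 - x * u - x ^+ 3 by lra.
    move=> /(mulr_ge0 (etrans (subr_ge0 _ _) u2)) P.
    have := mulr_ge0 (exprn_ge0 3 x0) P; nra.
  apply: le_trans key (le_trans Eu _); apply: ler_wpM2r => //; lra.
- have E : x ^+ 5 <= expR (- (A ^+ 2 / 2) - A * (T + 1)).
    by rewrite -expR_Nhalf_natl ler_expR; nra.
  have e : expR (- (1 / 2) - T) <= x ^+ 3 by rewrite -expR_Nhalf_natl ler_expR; lra.
  apply: le_trans key _; apply: ler_pM => //; try lra; exact: exprn_ge0.
Qed.

End margin_constant.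

Section standard_normal_tail.
Context {R : realType}.
Local Notation mu := (@lebesgue_measure R).
Local Notation phi := (normal_pdf (0 : R) 1).
Local Notation N := (normal_prob (0 : R) 1).

Lemma normal01_fin_num (X : set R) : measurable X -> N X \is a fin_num.
Proof.
move=> mX; rewrite ge0_fin_numE ?measure_ge0 //.
by apply: le_lt_trans (probability_le1 N mX) _; rewrite ltry.
Qed.

Lemma measurable_normal_pdf01 : measurable_fun setT (fun y => (phi y)%:E).
Proof. by apply/measurable_EFinP; exact: measurable_normal_pdf. Qed.

Lemma normal_pdf01_le (x y : R) : `|y| <= `|x| -> phi x <= phi y.
Proof.
move=> yx; rewrite !normal_pdf_expR //; apply: ler_wpM2l.
  by rewrite invr_ge0 mulr_ge0 ?ltW ?sqrt2pi_gt0.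
have : y ^+ 2 <= x ^+ 2.
  by rewrite -(real_normK (num_real x)) -(real_normK (num_real y)) ler_sqr ?nnegrE.
by rewrite ler_expR !subr0 expr1n mul1r; lra.
Qed.

Lemma normal01_itvcy_gt0 (t : R) : 0 < fine (N `[t, +oo[).
Proof.
have phi_gt0 : 0 < phi (`|t| + 1).
  by rewrite normal_pdf_expR // mulr_gt0 ?expR_gt0 // invr_gt0 mulr_gt0 ?sqrt2pi_gt0.
apply: fine_gt0; apply/andP; split; last first.
  by rewrite -ge0_fin_numE ?measure_ge0 // normal01_fin_num.
apply: (@lt_le_trans _ _ (N `[t, t + 1[)).
  apply: (@lt_le_trans _ _ ((phi (`|t| + 1))%:E * mu `[t, (t + 1)%R[)%E); last first.
    rewrite -integral_cst // /normal_prob; apply: ge0_le_integral => //.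
    - by move=> y _; rewrite lee_fin ltW.
    - exact: measurable_funTS measurable_normal_pdf01.
    move=> y /=; rewrite in_itv /= => /andP[ty yt]; rewrite lee_fin normal_pdf01_le //.
    have := ler_norm t; have := ler_norm (- t); rewrite normrN => tn nt.
    rewrite [X in _ <= X]ger0_norm ?addr_ge0 // ler_norml.
    by apply/andP; split; lra.
  rewrite lebesgue_measure_itv /= lte_fin ltrDl ltr01 -EFinD addrAC subrr add0r.
  by rewrite mule1 lte_fin.
apply: le_measure; rewrite ?inE //.
by move=> y /=; rewrite !in_itv /= andbT => /andP[].
Qed.

Lemma normal_pdf01_shift (y c : R) :
  phi (y + c) = expR (- (c ^+ 2 / 2)) * (phi y * expR (- (c * y))).
Proof.
rewrite !normal_pdf_expR // !subr0.
have -> : - (y + c) ^+ 2 / (1 ^+ 2 * 2) =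
          - (c ^+ 2 / 2) + (- y ^+ 2 / (1 ^+ 2 * 2) + - (c * y)) by field.
by rewrite !expRD; ring.
Qed.

Definition tilted_tail (t c : R) : \bar R :=
  (\int[mu]_(y in `[t, +oo[) (phi y * expR (- (c * y)))%:E)%E.

Lemma measurable_tilted_pdf (c : R) :
  measurable_fun setT (fun y => (phi y * expR (- (c * y)))%:E).
Proof.
apply/measurable_EFinP; apply: measurable_funM; first exact: measurable_normal_pdf.
apply: measurableT_comp; first exact: measurable_expR.
by apply: measurable_funN; exact: measurable_funM.
Qed.

Lemma normal01_itvcy_shift (t c : R) :
  N `[t + c, +oo[ = ((expR (- (c ^+ 2 / 2)))%:E * tilted_tail t c)%E.
Proof.
rewrite /normal_prob /tilted_tail integral_mkcond [in RHS]integral_mkcond.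
set G := (fun x => (phi x)%:E) \_ _.
set H := (fun y => (phi y * expR (- (c * y)))%:E) \_ _.
have mG : measurable_fun setT G.
  apply/(measurable_restrictT _ _).1 => //.
  exact: measurable_funTS measurable_normal_pdf01.
have mH : measurable_fun setT H.
  apply/(measurable_restrictT _ _).1 => //.
  exact: measurable_funTS (measurable_tilted_pdf c).
have G0 x : (0 <= G x)%E.
  by rewrite /G /patch; case: ifP => // _; rewrite lee_fin normal_pdf_ge0.
have H0 y : setT y -> (0 <= H y)%E.
  move=> _; rewrite /H /patch; case: ifP => // _.
  by rewrite lee_fin mulr_ge0 ?expR_ge0 ?normal_pdf_ge0.
have := ge0_integral_affine 1 c G ltr01 mG G0; rewrite invr1 mul1e => <-.
rewrite -ge0_integralZl_EFin ?expR_ge0 //.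
apply: eq_integral => y _; rewrite /G /H /patch /= mul1r.
have -> : (y + c \in `[t + c, +oo[%classic) = (y \in `[t, +oo[%classic).
  by apply/idP/idP => /set_mem; rewrite /= !in_itv /= !andbT ?lerD2r => ?;
    apply/mem_set; rewrite /= in_itv /= ?andbT ?lerD2r.
by case: ifP => _; rewrite ?mule0 // -EFinM normal_pdf01_shift.
Qed.

Lemma normal01_scale (D : set R) (k : R) : measurable D -> 0 <= k ->
  (k%:E * N D = \int[mu]_(x in D) (k * phi x)%:E)%E.
Proof.
move=> mD k0; rewrite /normal_prob -ge0_integralZl_EFin //.
- by move=> x _; rewrite lee_fin normal_pdf_ge0.
- exact: measurable_funTS measurable_normal_pdf01.
Qed.

Lemma tilted_tail_ge (t M c : R) : 0 <= c ->
  ((expR (- (c * M)))%:E * N `[t, M[ <= tilted_tail t c)%E.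
Proof.
move=> c0; rewrite normal01_scale ?expR_ge0 //.
apply: (@le_trans _ _ (\int[mu]_(y in `[t, M[) (phi y * expR (- (c * y)))%:E)%E).
  apply: ge0_le_integral => //.
  - by move=> y _; rewrite lee_fin mulr_ge0 ?expR_ge0 ?normal_pdf_ge0.
  - apply: measurable_funTS; apply/measurable_EFinP.
    by apply: measurable_funM => //; exact: measurable_normal_pdf.
  - exact: measurable_funTS (measurable_tilted_pdf c).
  move=> y /=; rewrite in_itv /= => /andP[_ yM].
  rewrite lee_fin mulrC ler_wpM2l ?normal_pdf_ge0 // ler_expR lerN2.
  by rewrite ler_wpM2l // ltW.
apply: ge0_subset_integral => //.
- exact: measurable_funTS (measurable_tilted_pdf c).
- by move=> y _; rewrite lee_fin mulr_ge0 ?expR_ge0 ?normal_pdf_ge0.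
by move=> y /=; rewrite !in_itv /= => /andP[->].
Qed.

Lemma tilted_tail_le (t c : R) : 0 <= c ->
  (tilted_tail t c <= (expR (- (c * t)))%:E * N `[t, +oo[)%E.
Proof.
move=> c0; rewrite normal01_scale ?expR_ge0 //.
apply: ge0_le_integral => //.
- by move=> y _; rewrite lee_fin mulr_ge0 ?expR_ge0 ?normal_pdf_ge0.
- exact: measurable_funTS (measurable_tilted_pdf c).
- apply: measurable_funTS; apply/measurable_EFinP.
  by apply: measurable_funM => //; exact: measurable_normal_pdf.
move=> y /=; rewrite in_itv /= andbT => ty.
rewrite lee_fin [leRHS]mulrC ler_wpM2l ?normal_pdf_ge0 // ler_expR lerN2.
exact: ler_wpM2l.
Qed.

Lemma normal01_itvcy_shift_ge (t M c : R) : 0 <= c ->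
  expR (- (c ^+ 2 / 2) - c * M) * fine (N `[t, M[) <= fine (N `[t + c, +oo[).
Proof.
move=> c0; set e := expR _.
have -> : e * fine (N `[t, M[) = fine (e%:E * N `[t, M[) by rewrite fineM ?normal01_fin_num.
apply: fine_le; rewrite ?fin_numM ?normal01_fin_num //.
rewrite normal01_itvcy_shift /e expRD EFinM -muleA.
by apply: lee_wpmul2l; [rewrite lee_fin expR_ge0 | exact: tilted_tail_ge].
Qed.

Lemma normal01_itvcy_shift_le (t c : R) : 0 <= c ->
  fine (N `[t + c, +oo[) <= expR (- (c ^+ 2 / 2) - c * t) * fine (N `[t, +oo[).
Proof.
move=> c0; set e := expR _.
have -> : e * fine (N `[t, +oo[) = fine (e%:E * N `[t, +oo[).
  by rewrite fineM ?normal01_fin_num.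
apply: fine_le; rewrite ?fin_numM ?normal01_fin_num //.
rewrite normal01_itvcy_shift /e expRD EFinM -muleA.
by apply: lee_wpmul2l; [rewrite lee_fin expR_ge0 | exact: tilted_tail_le].
Qed.

Lemma normal01_itvcy_split (t M : R) : t <= M ->
  fine (N `[t, +oo[) = fine (N `[t, M[) + fine (N `[M, +oo[).
Proof.
move=> tM; rewrite -fineD ?normal01_fin_num //; congr fine.
rewrite (@itv_bndbnd_setU _ _ (BLeft t) (BLeft M) +oo%O) ?bnd_simp // measureU //.
apply/seteqP; split => // y /= [];  rewrite !in_itv /= => /andP[_ yM].
by rewrite andbT leNgt yM.
Qed.

Lemma normal01_itvoy (t : R) : N `]t, +oo[ = N `[t, +oo[.
Proof.
rewrite /normal_prob integral_itv_obnd_cbnd //.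
exact: measurable_funTS measurable_normal_pdf01.
Qed.

Lemma normal01_tail_ratio (T A : R) : 0 < A -> A <= 1 -> A * T <= 1 ->
  1 / 20 * fine (N `[T, +oo[) <= fine (N `]T + A, +oo[).
Proof.
move=> A0 A1 AT.
have [T' [TT' T'0 AT']] : exists T', [/\ T <= T', 0 <= T' & A * T' <= 1].
  by have [T_le0|T_gt0] := lerP T 0; [exists 0 | exists T]; rewrite ?mulr0; split; lra.
have head := normal01_itvcy_shift_ge T (T' + 1) A (ltW A0).
have tail := normal01_itvcy_shift_le T' 1 ler01; rewrite expr1n [1 * T']mul1r in tail.
have mono : fine (N `[T', +oo[) <= fine (N `[T, +oo[).
  apply: fine_le; rewrite ?normal01_fin_num //; apply: le_measure; rewrite ?inE //.
  by move=> y /=; rewrite !in_itv /= !andbT; exact: le_trans.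
have split : fine (N `[T, +oo[) = fine (N `[T, T' + 1[) + fine (N `[T' + 1, +oo[).
  by apply: normal01_itvcy_split; lra.
have num := margin_bound _ _ A0 A1 T'0 AT'.
rewrite normal01_itvoy.
set a := fine (N `[T, +oo[) in mono split *.
set e1 := expR _ in head num; set e2 := expR _ in tail num.
have e1p : 0 <= e1 := expR_ge0 _.
have e2p : 0 <= e2 := expR_ge0 _.
have ge1 : (1 - e2) * a <= fine (N `[T, T' + 1[).
  by have := ler_wpM2l e2p mono; lra.
apply: le_trans head; apply: le_trans (ler_wpM2l e1p ge1).
by rewrite mulrA; apply: ler_wpM2r num; exact: ltW (normal01_itvcy_gt0 _).
Qed.

End standard_normal_tail.

Theorem lemma19 (R : realType) (d : nat) (sigma r : R) :
  0 < sigma -> sigma <= r ->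
  has_margins (gauss_prob sigma (d := d)) r (sigma ^+ 2 / r) (1 / 20).
Proof.
move=> s0 sr beta b b0 hb.
have r0 : 0 < r := lt_le_trans s0 sr.
have nb0 := enorm_gt0 _ _ b0.
have nested : [set e | b + sigma ^+ 2 / r * enorm beta < dotp beta e] `<=`
              [set e | b <= dotp beta e].
  by move=> e /= /ltW; apply: le_trans; rewrite lerDl mulr_ge0 ?divr_ge0 ?sqr_ge0 ?ltW.
rewrite /cond_prob (setIidl nested) -preimage_itvoy -preimage_itvcy.
rewrite !gauss_prob_halfspace //.
set T := b / (sigma * enorm beta); set A := sigma / r.
have -> : (b + sigma ^+ 2 / r * enorm beta) / (sigma * enorm beta) = T + A.
  by rewrite /T /A; field; rewrite !gt_eqF.
rewrite ler_pdivlMr ?normal01_itvcy_gt0 // normal01_tail_ratio //.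
- by rewrite divr_gt0.
- by rewrite ler_pdivrMr // mul1r.
have -> : A * T = b / (r * enorm beta) by rewrite /A /T; field; rewrite !gt_eqF.
by rewrite ler_pdivrMr ?mulr_gt0 // mul1r.
Qed.
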